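(* Let $S$ be a semigroup, $I$ an interior ideal of $S$, and $a\in S$ with $a\notin I$. Then there exists an irreducible interior ideal $B$ of $S$ such that $I\subseteq B$ and $a\notin B$.
   Context: A subsemigroup $I$ of $S$ (non-empty with $II\subseteq I$) is an interior ideal if $SIS\subseteq I$. An interior ideal $I$ is irreducible if for all interior ideals $I_1,I_2$ of $S$, $I_1\cap I_2=I$ implies $I_1=I$ or $I_2=I$. *)

Definition associative_op {S : Type} (mul : S -> S -> S) : Prop :=
  forall x y z : S, mul x (mul y z) = mul (mul x y) z.

Definition subsemigroup {S : Type} (mul : S -> S -> S) (I : S -> Prop) : Prop :=
  (exists x, I x) /\ (forall x y, I x -> I y -> I (mul x y)).

Definition interior_ideal {S : Type} (mul : S -> S -> S) (I : S -> Prop) : Prop :=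
  subsemigroup mul I /\ (forall s x t, I x -> I (mul (mul s x) t)).

Definition set_eq {S : Type} (A B : S -> Prop) : Prop := forall x, A x <-> B x.

Definition irreducible_interior_ideal {S : Type} (mul : S -> S -> S)
    (I : S -> Prop) : Prop :=
  interior_ideal mul I /\
  (forall I1 I2 : S -> Prop, interior_ideal mul I1 -> interior_ideal mul I2 ->
     set_eq (fun x => I1 x /\ I2 x) I -> set_eq I1 I \/ set_eq I2 I).

(* Zorn's lemma yields an interior ideal B containing I that is maximal among
   the interior ideals avoiding a, since the union of a chain of such ideals is
   again one. Such a B is irreducible: if B = I1 ∩ I2 with both I1, I2 strictly
   larger, maximality puts a in both, hence in B. *)

From mathcomp Require Import all_boot.
From mathcomp Require Import boolp classical_sets.

Local Open Scope classical_set_scope.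

Lemma Zorn_subset_above {T : Type} (P : set (set T)) (X0 : set T) :
    P X0 ->
    (forall F : set (set T), F `<=` P -> F !=set0 -> total_on F subset ->
      P (\bigcup_(X in F) X)) ->
  exists2 A, P A /\ X0 `<=` A & forall B, P B -> A `<=` B -> B `<=` A.
Proof.
move=> PX0 Pchain; pose Q := [set X | P X /\ X0 `<=` X].
pose R (X Y : {X | Q X}) := `[< sval X `<=` sval Y >].
have QX0 : Q X0 by split.
have [|X Y Z /asboolP XY /asboolP YZ|C Ctot|[A [PA X0A]] Amax] :=
  @ZL_preorder _ (exist _ X0 QX0) R.
- by move=> X; apply/asboolP.
- exact/asboolP/(subset_trans XY).
- (* Chains in Q may be empty; X0 bounds the empty one. *)
  have [[[X QX] CX]|C0] := pselect (C !=set0); last first.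
    by exists (exist _ X0 QX0) => Y CY; case: C0; exists Y.
  have QU : Q (\bigcup_(Y in sval @` C) Y).
    split; last exact: subset_trans (proj2 QX) (bigcup_sup (imageP sval CX)).
    apply: Pchain; first by move=> _ [[Z QZ] _ <-]; case: QZ.
      by exists X; exists (exist _ X QX).
    move=> Y Z [Y' CY <-] [Z' CZ <-].
    by have [/asboolP|/asboolP] := Ctot _ _ CY CZ; [left|right].
  exists (exist _ _ QU) => Y CY.
  by apply/asboolP; exact: bigcup_sup (imageP sval CY).
- exists A => // B PB AB.
  have QB : Q B by split => //; apply: subset_trans AB.
  exact/asboolP/(Amax (exist _ B QB))/asboolP.
Qed.

Section InteriorIdeals.

Context {S : Type} {mul : S -> S -> S}.

Lemma subsemigroup_bigcup_chain (F : set (set S)) :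
    F `<=` subsemigroup mul -> F !=set0 -> total_on F subset ->
  subsemigroup mul (\bigcup_(X in F) X).
Proof.
move=> Fsub [X FX] Ftot; split.
  by have [[x Xx] _] := Fsub X FX; exists x, X.
move=> x y [Y FY Yx] [Z FZ Zy].
have [YZ|ZY] := Ftot Y Z FY FZ.
- by exists Z => //; apply: (Fsub Z FZ).2 => //; apply: YZ.
- by exists Y => //; apply: (Fsub Y FY).2 => //; apply: ZY.
Qed.

Lemma interior_ideal_bigcup_chain (F : set (set S)) :
    F `<=` interior_ideal mul -> F !=set0 -> total_on F subset ->
  interior_ideal mul (\bigcup_(X in F) X).
Proof.
move=> Fsub F0 Ftot; split.
  by apply: subsemigroup_bigcup_chain => // X /Fsub [].
by move=> s x t [X FX Xx]; exists X => //; apply: (Fsub X FX).2.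
Qed.

Lemma irreducible_of_maximal_avoiding (B : set S) (a : S) :
    interior_ideal mul B -> ~ B a ->
    (forall J, interior_ideal mul J -> ~ J a -> B `<=` J -> J `<=` B) ->
  irreducible_interior_ideal mul B.
Proof.
move=> BI Ba Bmax; split => // I1 I2 I1I I2I I12B.
have BI1 : B `<=` I1 by move=> x /I12B [].
have BI2 : B `<=` I2 by move=> x /I12B [].
have [I1a|I1a] := pselect (I1 a); last first.
  by left => x; split; [apply: Bmax | apply: BI1].
have [I2a|I2a] := pselect (I2 a); last first.
  by right => x; split; [apply: Bmax | apply: BI2].
by case: Ba; apply/I12B.
Qed.

End InteriorIdeals.

Theorem mainTheorem11 (S : Type) (mul : S -> S -> S)
  (Hassoc : associative_op mul) (I : S -> Prop) (HI : interior_ideal mul I)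
  (a : S) (Ha : ~ I a) :
  exists B : S -> Prop, irreducible_interior_ideal mul B /\
    (forall x, I x -> B x) /\ ~ B a.
Proof.
pose avoiding := [set J : set S | interior_ideal mul J /\ ~ J a].
have avoiding_chain F : F `<=` avoiding -> F !=set0 -> total_on F subset ->
    avoiding (\bigcup_(X in F) X).
  move=> Fsub F0 Ftot; split.
    by apply: interior_ideal_bigcup_chain => // X /Fsub [].
  by case=> X /Fsub [_ Xa].
have [B [[BI Ba] IB] Bmax] :=
  Zorn_subset_above avoiding I (conj HI Ha) avoiding_chain.
exists B; split=> //.
by apply: (irreducible_of_maximal_avoiding B a) => // J JI Ja; apply: Bmax.
Qed.
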